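(* For all non-negative integers $p,q,r$ with $p+q\le r$, $\lambda_{\min}(\mathcal{Q}_{p,q,r})\ge-\tau$, where $\tau=\frac{1+\sqrt5}{2}$.
   Context: An edge-signed graph is a finite simple graph each of whose edges is labelled $+$ or $-$; its signed adjacency matrix $M(\mathcal{S})$ has $(u,v)$-entry $1$ for a $(+)$-edge, $-1$ for a $(-)$-edge, $0$ otherwise, and $\lambda_{\min}(\mathcal{S})$ denotes its smallest eigenvalue. For non-negative integers $p,q,r$ with $p+q\le r$, $\mathcal{Q}_{p,q,r}$ is the edge-signed graph defined as follows: its vertex set is a disjoint union $V_p\cup V_q\cup V_r$ with $|V_p|=p$, $|V_q|=q$, $|V_r|=r$; choose disjoint subsets $U_p,U_q\subseteq V_r$ with $|U_p|=p$, $|U_q|=q$ and bijections $\sigma:V_p\to U_p$, $\rho:V_q\to U_q$. The $(+)$-edges are all pairs of distinct vertices of $V_r$ together with the pairs $\{v,\sigma(v)\}$, $v\in V_p$; the $(-)$-edges are the pairs $\{v,\rho(v)\}$, $v\in V_q$; there are no other edges. *)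

From HB Require Import structures.
From mathcomp Require Import all_boot all_order all_algebra.
Set Implicit Arguments. Unset Strict Implicit. Unset Printing Implicit Defensive.
Import Order.TTheory GRing.Theory Num.Theory.
Local Open Scope ring_scope.

(* Vertices of Q_{p,q,r} are 'I_(p+q+r) = 'I_((p+q)+r): the first p are V_p,
   the next q are V_q, the last r are V_r. *)
Definition Qclass (p q r : nat) (i : 'I_(p + q + r)) : ('I_p + 'I_q) + 'I_r :=
  match split i with
  | inl a => inl (split a)
  | inr k => inr k
  end.

Definition Qentry (R : pzRingType) (p q r : nat)
    (sigma : 'I_p -> 'I_r) (rho : 'I_q -> 'I_r)
    (u v : ('I_p + 'I_q) + 'I_r) : R :=
  match u, v with
  | inr a, inr b => if a != b then 1 else 0
  | inl (inl x), inr b => if sigma x == b then 1 else 0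
  | inr b, inl (inl x) => if sigma x == b then 1 else 0
  | inl (inr y), inr b => if rho y == b then -1 else 0
  | inr b, inl (inr y) => if rho y == b then -1 else 0
  | _, _ => 0
  end.

Definition Qmx (R : pzRingType) (p q r : nat)
    (sigma : 'I_p -> 'I_r) (rho : 'I_q -> 'I_r) : 'M[R]_(p + q + r) :=
  \matrix_(i, j) Qentry R sigma rho (Qclass i) (Qclass j).

Definition tau (R : rcfType) : R := (1 + Num.sqrt 5) / 2.

From HB Require Import structures.
From mathcomp Require Import all_boot all_order all_algebra.
From mathcomp Require Import ring lra.
Set Implicit Arguments. Unset Strict Implicit. Unset Printing Implicit Defensive.
Import Order.TTheory GRing.Theory Num.Theory.
Local Open Scope ring_scope.

(* Let v be a left
   eigenvector of M = M(Q_{p,q,r}) for an eigenvalue a < -tau, and write f, h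
   and g for its restrictions to V_p, V_q and V_r.  The eigen-equations read
     g(sigma x) = a f(x),    g(rho y) = -a h(y),
     sum_{sigma x = b} f(x) - sum_{rho y = b} h(y) + (T - g(b)) = a g(b),
   where T = sum_b g(b).  Multiplying the last one by a and substituting the
   first two gives  a T = g(b) (a^2 + a - k(b))  with k(b) in {0,1} counting
   the pendant vertices attached to b.  Since a < -tau, a^2 + a - 1 > 0, so
   every coefficient c(b) = a^2 + a - k(b) is positive; summing g(b) = a T/c(b)
   gives T (1 - a S) = 0 with S >= 0, hence T = 0, hence g = 0, f = 0, h = 0,
   contradicting v <> 0.  The file first locates the three vertex classes,
   then proves the purely numerical facts (golden ratio, the "star" lemma),
   then derives the eigen-equations, and finally assembles the theorem. *)

Lemma Qclass_p p q r (x : 'I_p) : Qclass (lshift r (lshift q x)) = inl (inl x).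
Proof. by rewrite /Qclass (unsplitK (inl _)) (unsplitK (inl _)). Qed.

Lemma Qclass_q p q r (y : 'I_q) : Qclass (lshift r (rshift p y)) = inl (inr y).
Proof. by rewrite /Qclass (unsplitK (inl _)) (unsplitK (inr _)). Qed.

Lemma Qclass_r p q r (b : 'I_r) : Qclass (rshift (p + q) b) = inr b.
Proof. by rewrite /Qclass (unsplitK (inr _)). Qed.

Lemma sum_Qvertices (V : nmodType) p q r (F : 'I_(p + q + r) -> V) :
  \sum_i F i = \sum_(x < p) F (lshift r (lshift q x))
             + \sum_(y < q) F (lshift r (rshift p y))
             + \sum_(b < r) F (rshift (p + q) b).
Proof. by rewrite big_split_ord /= big_split_ord. Qed.

Definition hit (R : pzSemiRingType) m r (f : 'I_m -> 'I_r) (b : 'I_r) : R :=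
  if [exists x, f x == b] then 1 else 0.

Lemma sum_fibre_indicator (R : pzSemiRingType) m r (f : 'I_m -> 'I_r)
    (f_inj : injective f) (b : 'I_r) :
  \sum_(x < m) (if f x == b then 1 else 0) = hit R f b.
Proof.
rewrite /hit; case: existsP => [[x0 /eqP fx0] | no_preim].
  rewrite (bigD1 x0) //= fx0 eqxx big1 ?addr0 // => x x_neq.
  by case: eqP => // fx; case/eqP: x_neq; apply: f_inj; rewrite fx fx0.
by rewrite big1 // => x _; case: eqP => // fx; case: no_preim; exists x; rewrite fx.
Qed.

Lemma hit_disjoint_le1 (R : numDomainType) m n r
    (f : 'I_m -> 'I_r) (f' : 'I_n -> 'I_r)
    (disj : forall x y, f x != f' y) (b : 'I_r) :
  hit R f b + hit R f' b <= 1.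
Proof.
rewrite /hit; case: existsP => [[x /eqP fx]|_]; case: existsP => [[y /eqP fy]|_].
- by have := disj x y; rewrite fx fy eqxx.
- by rewrite addr0.
- by rewrite add0r.
- by rewrite addr0 ler01.
Qed.

Lemma golden_quadratic_pos (R : rcfType) (a : R) :
  a < - tau R -> a < 0 /\ 0 < a ^+ 2 + a - 1.
Proof.
have sqrt5_sq : Num.sqrt (5 : R) ^+ 2 = 5 by rewrite sqr_sqrtr // ler0n.
have sqrt5_ge0 : 0 <= Num.sqrt (5 : R) by exact: sqrtr_ge0.
have tau_gt1 : 1 < tau R by rewrite /tau; nra.
have tau_sq : tau R ^+ 2 = tau R + 1 by rewrite /tau; nra.
by move=> a_lt; split; nra.
Qed.

(* Star lemma: if a < 0 and a (sum_b g b) = g b * c b with all c b > 0, then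
   g vanishes; indeed T = sum g satisfies T (1 - a sum_b 1/c b) = 0. *)
Lemma star_vanish (R : realFieldType) r (a : R) (g c : 'I_r -> R) :
  a < 0 -> (forall b, 0 < c b) ->
  (forall b, a * \sum_(b' < r) g b' = g b * c b) -> forall b, g b = 0.
Proof.
move=> a_lt0 c_gt0 star; set T := \sum_(b' < r) g b'.
have g_def b : g b = a * T / c b by rewrite (star b) mulfK // gt_eqF.
pose S := \sum_(b < r) (c b)^-1.
have S_ge0 : 0 <= S by apply: sumr_ge0 => b _; rewrite invr_ge0 ltW.
have T_fix : T * (1 - a * S) = 0.
  have T_eq : T = a * T * S by rewrite {1}/T (eq_bigr _ (fun b _ => g_def b)) -mulr_sumr.
  by apply/eqP; rewrite mulrBr mulr1 subr_eq0; apply/eqP; rewrite {1}T_eq; ring.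
have T0 : T = 0.
  move/eqP: T_fix; rewrite mulf_eq0 => /orP [/eqP //|].
  rewrite subr_eq0 => /eqP one_eq.
  have pos : 0 < 1 - a * S by nra.
  by rewrite -one_eq subrr ltxx in pos.
by move=> b; rewrite g_def T0 mulr0 mul0r.
Qed.

Section QEigenEquations.

Variables (R : comNzRingType) (p q r : nat).
Variables (sigma : 'I_p -> 'I_r) (rho : 'I_q -> 'I_r).
Variables (v : 'rV[R]_(p + q + r)) (a : R).
Hypothesis eigen : v *m Qmx R sigma rho = a *: v.

Definition vp (x : 'I_p) : R := v 0 (lshift r (lshift q x)).
Definition vq (y : 'I_q) : R := v 0 (lshift r (rshift p y)).
Definition vr (b : 'I_r) : R := v 0 (rshift (p + q) b).

Lemma eigen_entry j : \sum_i v 0 i * Qmx R sigma rho i j = a * v 0 j.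
Proof. by have := congr1 (fun m : 'rV[R]_(p + q + r) => m 0 j) eigen; rewrite !mxE. Qed.

(* Column of a vertex x of V_p: its only neighbour is sigma x. *)
Lemma eigen_Vp x : vr (sigma x) = a * vp x.
Proof.
rewrite -eigen_entry sum_Qvertices.
rewrite big1 ?add0r => [|x' _]; last by rewrite mxE Qclass_p Qclass_p mulr0.
rewrite big1 ?add0r => [|y' _]; last by rewrite mxE Qclass_q Qclass_p mulr0.
rewrite (bigD1 (sigma x)) //= mxE Qclass_r Qclass_p /= eqxx mulr1.
rewrite big1 ?addr0 // => b b_neq; rewrite mxE Qclass_r Qclass_p /=.
by rewrite eq_sym (negbTE b_neq) mulr0.
Qed.

(* Column of a vertex y of V_q: its only neighbour is rho y, with sign -1. *)
Lemma eigen_Vq y : vr (rho y) = - a * vq y.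
Proof.
rewrite mulNr -eigen_entry sum_Qvertices.
rewrite big1 ?add0r => [|x' _]; last by rewrite mxE Qclass_p Qclass_q mulr0.
rewrite big1 ?add0r => [|y' _]; last by rewrite mxE Qclass_q Qclass_q mulr0.
rewrite (bigD1 (rho y)) //= mxE Qclass_r Qclass_q /= eqxx mulrN1.
rewrite big1 ?addr0 ?opprK // => b b_neq; rewrite mxE Qclass_r Qclass_q /=.
by rewrite eq_sym (negbTE b_neq) mulr0.
Qed.

Hypotheses (sigma_inj : injective sigma) (rho_inj : injective rho).

(* Column of a vertex b of V_r, multiplied by a and with the pendant
   contributions eliminated through [eigen_Vp] and [eigen_Vq]. *)
Lemma eigen_Vr b :
  a * \sum_(c < r) vr c = vr b * (a ^+ 2 + a - (hit R sigma b + hit R rho b)).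
Proof.
have := eigen_entry (rshift (p + q) b); rewrite sum_Qvertices.
under eq_bigr => x _ do rewrite mxE Qclass_p Qclass_r /=.
under [X in _ + X + _]eq_bigr => y _ do rewrite mxE Qclass_q Qclass_r /=.
under [X in _ + X]eq_bigr => c _ do rewrite mxE !Qclass_r /=.
have Vp_part : a * \sum_(x < p) vp x * (if sigma x == b then 1 else 0)
               = vr b * hit R sigma b.
  rewrite -(sum_fibre_indicator _ sigma_inj) !mulr_sumr; apply: eq_bigr => x _.
  by case: eqP => [<-|_]; rewrite ?mulr0 // eigen_Vp !mulr1.
have Vq_part : a * \sum_(y < q) vq y * (if rho y == b then -1 else 0)
               = vr b * hit R rho b.
  rewrite -(sum_fibre_indicator _ rho_inj) !mulr_sumr; apply: eq_bigr => y _.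
  by case: eqP => [<-|_]; rewrite ?mulr0 // eigen_Vq; ring.
have Vr_part : \sum_(c < r) vr c * (if c != b then 1 else 0)
               = \sum_(c < r) vr c - vr b.
  rewrite [in RHS](bigD1 b) //= (bigD1 b) //= eqxx mulr0 add0r addrAC subrr add0r.
  by apply: eq_bigr => c c_neq; rewrite c_neq mulr1.
rewrite Vr_part => /(congr1 (fun z => a * z)); rewrite !mulrDr Vp_part Vq_part.
rewrite -/(vr b) => /eqP; rewrite -subr_eq0 => /eqP col_b.
by rewrite -[LHS]subr0 -[X in _ - X]col_b; ring.
Qed.

End QEigenEquations.

Theorem mainTheorem5 (R : rcfType) (p q r : nat) (hpqr : (p + q <= r)%N)
    (sigma : 'I_p -> 'I_r) (rho : 'I_q -> 'I_r)
    (hsigma : injective sigma) (hrho : injective rho)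
    (hdisj : forall (x : 'I_p) (y : 'I_q), sigma x != rho y)
    (a : R) :
  eigenvalue (Qmx R sigma rho) a -> - tau R <= a.
Proof.
move/eigenvalueP => [v eigen v_neq0]; rewrite leNgt; apply/negP => a_lt.
have [a_lt0 golden_pos] := golden_quadratic_pos a_lt.
have coef_pos b : 0 < a ^+ 2 + a - (hit R sigma b + hit R rho b).
  by have := hit_disjoint_le1 R hdisj b; lra.
have vr0 := star_vanish a_lt0 coef_pos (eigen_Vr eigen hsigma hrho).
have vp0 x : vp v x = 0.
  by move/eqP: (eigen_Vp eigen x); rewrite vr0 eq_sym mulf_eq0 (lt_eqF a_lt0) => /eqP.
have vq0 y : vq v y = 0.
  by move/eqP: (eigen_Vq eigen y); rewrite vr0 eq_sym mulf_eq0 oppr_eq0 (lt_eqF a_lt0) => /eqP.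
case/negP: v_neq0; apply/eqP/rowP => j; rewrite mxE.
rewrite -(splitK j); case: (split j) => [k|b]; last exact: vr0.
by rewrite -(splitK k); case: (split k) => [x|y]; [exact: vp0 | exact: vq0].
Qed.
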